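(* Let $\mathcal D\subseteq M(\mathbb C)^g$ be a bounded non-commutative domain containing $0$, let $f:\mathcal D\to\mathcal D$ be an analytic free map, and let $\phi=f[1]:\mathcal D(1)\to\mathcal D(1)$ with $\phi(0)=0$. For a positive integer $n$ let $\Phi=f[n]:\mathcal D(n)\to\mathcal D(n)$. Then the derivative $\Phi'(0):M_n(\mathbb C)^g\to M_n(\mathbb C)^g$ is unitarily equivalent to $I_n\otimes\phi'(0)$ (identifying $M_n(\mathbb C)^g$ with $M_n(\mathbb C)\otimes\mathbb C^g$).
   Context: $M_n(\mathbb C)^g$ denotes $g$-tuples $X=(X_1,\dots,X_g)$ of $n\times n$ complex matrices, identified with $M_n(\mathbb C)\otimes\mathbb C^g$; products, unitary conjugation and direct sums of tuples are entrywise. A non-commutative set $\mathcal D\subseteq M(\mathbb C)^g$ is a sequence $(\mathcal D(n))_n$, $\mathcal D(n)\subseteq M_n(\mathbb C)^g$, closed under simultaneous unitary similarity and under direct sums; a non-commutative domain if each $\mathcal D(n)$ is open and connected; containing $0$ if $0\in\mathcal D(n)$ for all $n$; bounded if there is $C\in\mathbb R$ with $C^2I-\sum_jX_jX_j^*\succ0$ for all $n$ and $X\in\mathcal D(n)$. A free map is a sequence of functions $f[n]:\mathcal D(n)\to\mathcal D(n)$ such that whenever $X\in\mathcal D(n)$, $Y\in\mathcal D(m)$, $\Gamma\in\mathbb C^{n\times m}$ with $X\Gamma=\Gamma Y$, then $f[n](X)\Gamma=\Gamma f[m](Y)$; it is analytic if each $f[n]$ is holomorphic. *)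

From HB Require Import structures.
From mathcomp Require Import all_boot all_order all_algebra.
From mathcomp Require Import complex.
From mathcomp Require Import all_classical all_reals all_analysis.
Import Order.TTheory GRing.Theory Num.Theory.
Import numFieldNormedType.Exports.

Set Implicit Arguments. Unset Strict Implicit. Unset Printing Implicit Defensive.

Local Open Scope ring_scope.
Local Open Scope classical_set_scope.

(* The complex numbers, packaged as a numClosedFieldType so that MathComp-Analysis
   equips it (and its matrix spaces) with the metric topology of the modulus. *)
Definition Cx (R : realType) : numClosedFieldType := R[i].

Definition tup (R : realType) (g n : nat) := 'I_g -> 'M[Cx R]_n.

Definition adjmx (R : realType) (m n : nat) (A : 'M[Cx R]_(m, n)) : 'M[Cx R]_(n, m) :=
  (map_mx Num.conj A)^T.

Definition unitarymx (R : realType) (n : nat) (U : 'M[Cx R]_n) : Prop :=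
  U *m adjmx U = 1%:M.

Definition posdef (R : realType) (n : nat) (A : 'M[Cx R]_n) : Prop :=
  forall v : 'cV[Cx R]_n, v != 0 -> 0 < (adjmx v *m A *m v) 0 0.

(* Identification M_n(C)^g = M_n(C) (x) C^g with C^(g x n^2): row j is vec(X_j).
   This is a linear isometric bijection (Hilbert-Schmidt norm on tuples,
   Frobenius norm on the matrix), used to transport topology/derivatives. *)
Definition tvec (R : realType) (g n : nat) (X : tup R g n) : 'M[Cx R]_(g, n * n) :=
  \matrix_(j, k) mxvec (X j) 0 k.

Definition untvec (R : realType) (g n : nat) (S : 'M[Cx R]_(g, n * n)) : tup R g n :=
  fun j => vec_mx (row j S).

Definition nc_set (R : realType) (g : nat) (D : forall n, set (tup R g n)) : Prop :=
  (forall n (X : tup R g n) (U : 'M[Cx R]_n),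
      unitarymx U -> D n X -> D n (fun j => U *m X j *m adjmx U)) /\
  (forall n m (X : tup R g n) (Y : tup R g m),
      D n X -> D m Y -> D (n + m)%N (fun j => block_mx (X j) 0 0 (Y j))).

Definition nc_domain (R : realType) (g : nat) (D : forall n, set (tup R g n)) : Prop :=
  nc_set D /\ forall n, open (tvec (g:=g) (n:=n) @` D n) /\ connected (tvec (g:=g) (n:=n) @` D n).

Definition contains0 (R : realType) (g : nat) (D : forall n, set (tup R g n)) : Prop :=
  forall n, D n (fun _ => 0).

Definition nc_bounded (R : realType) (g : nat) (D : forall n, set (tup R g n)) : Prop :=
  exists c : R, forall n (X : tup R g n), D n X ->
    posdef ((((c%:C)%C : Cx R) ^+ 2)%:M - \sum_(j < g) X j *m adjmx (X j)).

Definition free_map (R : realType) (g : nat) (D : forall n, set (tup R g n))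
    (f : forall n, tup R g n -> tup R g n) : Prop :=
  (forall n (X : tup R g n), D n X -> D n (f n X)) /\
  (forall n m (X : tup R g n) (Y : tup R g m) (G : 'M[Cx R]_(n, m)),
      D n X -> D m Y -> (forall j, X j *m G = G *m Y j) ->
      forall j, f n X j *m G = G *m f m Y j).

Definition fhat (R : realType) (g : nat) (f : forall n, tup R g n -> tup R g n) (n : nat)
    (S : 'M[Cx R]_(g, n * n)) : 'M[Cx R]_(g, n * n) :=
  tvec (f n (untvec S)).
Arguments fhat {R g} f n S.

(* analytic: each f[n] is holomorphic (complex Frechet differentiable) on D(n) *)
Definition analytic (R : realType) (g : nat) (D : forall n, set (tup R g n))
    (f : forall n, tup R g n -> tup R g n) : Prop :=
  forall n (X : tup R g n), D n X -> differentiable (fhat f n) (tvec X).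

Definition hs_inner (R : realType) (p q : nat) (S T : 'M[Cx R]_(p, q)) : Cx R :=
  \sum_(i < p) \sum_(k < q) S i k * Num.conj (T i k).

Definition unitary_op (R : realType) (p q : nat) (U : 'M[Cx R]_(p, q) -> 'M[Cx R]_(p, q)) : Prop :=
  (forall (a : Cx R) S T, U (a *: S + T) = a *: U S + U T) /\
  bijective U /\
  (forall S T, hs_inner (U S) (U T) = hs_inner S T).

(* I_N (x) l : applies l : C^g -> C^g to each of the N columns
   (the C^g tensor factor is the row index) *)
Definition ampl (R : realType) (g N : nat) (l : 'M[Cx R]_(g, 1) -> 'M[Cx R]_(g, 1))
    (S : 'M[Cx R]_(g, N)) : 'M[Cx R]_(g, N) :=
  \matrix_(i, k) l (col k S) i 0.

From HB Require Import structures.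
From mathcomp Require Import all_boot all_order all_algebra.
From mathcomp Require Import complex.
From mathcomp Require Import all_classical all_reals all_analysis.
Import Order.TTheory GRing.Theory Num.Theory.
Import numFieldNormedType.Exports.

Set Implicit Arguments.
Unset Strict Implicit.
Unset Printing Implicit Defensive.
Local Open Scope ring_scope.
Local Open Scope classical_set_scope.

(* Differentiating the intertwining relation f[n](X) G = G f[m](Y) along the
   lines t H, t K through 0 (which stay in the open sets D(n), D(m)) shows that
   the derivatives L_k = f[k]'(0) intertwine in the same way.  For a linear
   family with this property, intertwining with the column e_y (from level n
   to level 1) gives L_n(c (x) E_aa) = L_1(c) (x) E_aa, and intertwining with
   the shear I + E_ab (from level n to itself) relates c (x) E_ab to c (x) E_bb
   and gives L_n(c (x) E_ab) = L_1(c) (x) E_ab.  By linearity L_n = I_n (x) L_1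
   in the identification tvec, so the unitary can be taken to be the identity. *)

Lemma linear_mx_continuous (K : numFieldType) (V : normedModType K) m n
    (A : {linear 'M[K]_(m, n) -> V}) : continuous A.
Proof.
have -> : A = (fun S => \sum_i \sum_j S i j *: A (delta_mx i j)) :> (_ -> _).
  apply: funext => S; rewrite [in LHS](matrix_sum_delta S) linear_sum.
  by apply: eq_bigr => i _; rewrite linear_sum; apply: eq_bigr => j _; rewrite linearZ.
apply: (continuous_big add_continuous) => i _.
apply: (continuous_big add_continuous) => j _.
by move=> S; apply: continuousZr_tmp; exact: coord_continuous.
Qed.

Lemma derive_along_line (K : numFieldType) (V W : normedModType K)
    (F : V -> W) (v : V) :
  'D_v F 0 = 'D_1 (fun h : K => F (h *: v)) 0.
Proof.
rewrite /derive /=; under [in RHS]eq_fun do rewrite addr0 scale0r [_%:A]mulr1.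
by under eq_fun do rewrite addr0.
Qed.

Lemma diff_eq_along_lines (K : numFieldType) (V1 V2 W : normedModType K)
    (F1 : V1 -> W) (F2 : V2 -> W) (v1 : V1) (v2 : V2) :
  differentiable F1 0 -> differentiable F2 0 ->
  (\forall h \near (0 : K), F1 (h *: v1) = F2 (h *: v2)) ->
  'd F1 0 v1 = 'd F2 0 v2.
Proof.
move=> dF1 dF2 F12; rewrite -(deriveE v1 dF1) -(deriveE v2 dF2).
rewrite (derive_along_line F1) (derive_along_line F2).
exact: near_eq_derive.
Qed.

Lemma diff_linear_comp (K : numFieldType) (V W U : normedModType K)
    (A : {linear W -> U}) (F : V -> W) (x v : V) : continuous A ->
  differentiable F x -> 'd (A \o F) x v = A ('d F x v).
Proof.
move=> cA dF; rewrite diff_comp //; last exact: linear_differentiable.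
by rewrite diff_lin.
Qed.

Lemma untvecE (R : realType) g n (S : 'M[Cx R]_(g, n * n)) j :
  untvec S j = vec_mx (row j S).
Proof. by []. Qed.

Lemma tvecK (R : realType) g n : cancel (@tvec R g n) (@untvec R g n).
Proof.
move=> X; apply: funext => j; rewrite untvecE -[RHS]mxvecK.
by congr vec_mx; apply/rowP => k; rewrite !mxE.
Qed.

Lemma untvecK (R : realType) g n : cancel (@untvec R g n) (@tvec R g n).
Proof. by move=> S; apply/matrixP => j k; rewrite !mxE vec_mxK mxE. Qed.

Lemma untvec_inj (R : realType) g n : injective (@untvec R g n).
Proof. exact: can_inj (@untvecK R g n). Qed.

Lemma tvec0 (R : realType) g n : tvec (fun _ : 'I_g => 0 : 'M[Cx R]_n) = 0.
Proof. by apply/matrixP => j k; rewrite !mxE linear0 mxE. Qed.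

Definition intertwines (R : realType) g n m (X : tup R g n) (Y : tup R g m)
    (G : 'M[Cx R]_(n, m)) : Prop :=
  forall j, X j *m G = G *m Y j.

Section FreeMapDerivative.
Variables (R : realType) (g : nat) (D : forall n, set (tup R g n)).
Arguments D : clear implicits.
Variable f : forall n, tup R g n -> tup R g n.
Hypotheses (Dnc : nc_domain D) (D0 : contains0 D).
Hypotheses (f_free : free_map D f) (f_an : analytic D f).

Lemma near0_in_domain n (H : 'M[Cx R]_(g, n * n)) :
  \forall h \near (0 : Cx R), D n (untvec (h *: H)).
Proof.
have D_nbhs0 : nbhs (0 : 'M[Cx R]_(g, n * n)) (@tvec R g n @` D n).
  apply: open_nbhs_nbhs; split; first exact: (Dnc.2 n).1.
  by exists (fun _ => 0); [exact: D0 | exact: tvec0].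
have /(_ _ D_nbhs0) : (fun h : Cx R => h *: H) @ (0 : Cx R) --> (0 : 'M[Cx R]_(g, n * n)).
  by rewrite -(scale0r H); exact: (@scalel_continuous _ _ H 0).
move=> D_near; near=> h.
have [X DX <-] : (@tvec R g n @` D n) (h *: H) by near: h.
by rewrite tvecK.
Unshelve. all: by end_near.
Qed.

Lemma fhat_differentiable0 n : differentiable (fhat f n) 0.
Proof. by rewrite -tvec0; apply: f_an; exact: D0. Qed.

Lemma diff_fhat_intertwines n m (H : 'M[Cx R]_(g, n * n)) (G : 'M[Cx R]_(g, m * m))
    (Ga : 'M[Cx R]_(n, m)) :
  intertwines (untvec H) (untvec G) Ga ->
  intertwines (untvec ('d (fhat f n) 0 H)) (untvec ('d (fhat f m) 0 G)) Ga.
Proof.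
move=> HG j; pose A := mulmxr Ga \o @vec_mx _ n n \o row j.
pose B := mulmx Ga \o @vec_mx _ m m \o row j.
have cA : continuous A by exact: linear_mx_continuous.
have cB : continuous B by exact: linear_mx_continuous.
have dFn := fhat_differentiable0 n; have dFm := fhat_differentiable0 m.
rewrite !untvecE; transitivity ('d (A \o fhat f n) 0 H).
  by symmetry; exact: diff_linear_comp.
transitivity ('d (B \o fhat f m) 0 G); last exact: diff_linear_comp.
have dA : differentiable A (fhat f n 0) by exact: linear_differentiable.
have dB : differentiable B (fhat f m 0) by exact: linear_differentiable.
apply: diff_eq_along_lines;
  [exact: differentiable_comp dFn dA|exact: differentiable_comp dFm dB|].
have [Dn Dm] := (near0_in_domain H, near0_in_domain G).
near=> h; rewrite /A /B /= -!untvecE /fhat !tvecK.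
apply: f_free.2; [by near: h|by near: h|].
by move=> i; rewrite !untvecE !linearZ /= -scalemxAl -!untvecE HG scalemxAr.
Unshelve. all: by end_near.
Qed.

End FreeMapDerivative.

Lemma untvec_delta (R : realType) g n (c : 'M[Cx R]_(g, 1)) (a b : 'I_n) j :
  untvec (c *m delta_mx 0 (mxvec_index a b)) j = c j 0 *: delta_mx a b.
Proof.
by rewrite untvecE row_mul [row j c]mx11_scalar mul_scalar_mx linearZ /= vec_mx_delta mxE.
Qed.

Lemma untvec_dim1 (R : realType) g (X : 'M[Cx R]_(g, 1 * 1)) j :
  untvec X j = (X j 0)%:M.
Proof.
by rewrite [LHS]mx11_scalar untvecE !mxE (ord1 (@mxvec_index 1 1 0 0)).
Qed.

Lemma amplE (R : realType) g N (l : 'M[Cx R]_(g, 1) -> 'M[Cx R]_(g, 1))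
    (S : 'M[Cx R]_(g, N)) :
  ampl l S = \sum_(k < N) l (col k S) *m delta_mx 0 k.
Proof.
apply/matrixP => i k; rewrite summxE (bigD1 k) //= big1 => [|k' k'k].
  by rewrite !mxE big_ord1 !mxE eqxx mulr1 addr0.
by rewrite !mxE big_ord1 !mxE [k == k']eq_sym (negbTE k'k) andbF mulr0.
Qed.

Lemma ampl_id (R : realType) g N (S : 'M[Cx R]_(g, N)) : ampl id S = S.
Proof. by apply/matrixP => i k; rewrite !mxE. Qed.

Section NcLinearMap.
Variables (R : realType) (g : nat).
Variable L : forall k, {linear 'M[Cx R]_(g, k * k) -> 'M[Cx R]_(g, k * k)}.
Hypothesis L_intertwines : forall n m (H : 'M[Cx R]_(g, n * n))
    (G : 'M[Cx R]_(g, m * m)) (Ga : 'M[Cx R]_(n, m)),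
  intertwines (untvec H) (untvec G) Ga ->
  intertwines (untvec (L n H)) (untvec (L m G)) Ga.

Lemma nc_linear_delta_diag n (c : 'M[Cx R]_(g, 1)) (a : 'I_n) :
  L n (c *m delta_mx 0 (mxvec_index a a)) = L 1 c *m delta_mx 0 (mxvec_index a a).
Proof.
apply: untvec_inj; apply: funext => j; rewrite untvec_delta.
apply/matrixP => x y; set d := L 1 c j 0.
have col_y : intertwines (untvec (c *m delta_mx 0 (mxvec_index a a)))
    (@untvec R g 1 ((y == a)%:R *: c)) (delta_mx y 0).
  move=> i; rewrite untvec_delta untvec_dim1 mxE -scalemxAl mul_delta_mx_cond.
  rewrite mul_mx_scalar; case: (eqVneq y a) => [->|_].
    by rewrite ?eqxx ?mul1r ?mulr1n.
  by rewrite mul0r scale0r mulr0n scaler0.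
have := congr1 (fun M : 'M[Cx R]_(n, 1) => M x 0) (@L_intertwines n 1 _ _ _ col_y j).
rewrite /= -colE untvec_dim1 linearZ /= mxE mul_mx_scalar !mxE eqxx andbT -/d => ->.
case: (eqVneq y a) => [->|_]; first by rewrite andbT mul1r.
by rewrite andbF !mul0r mulr0.
Qed.

Lemma nc_linear_delta n (c : 'M[Cx R]_(g, 1)) (a b : 'I_n) :
  L n (c *m delta_mx 0 (mxvec_index a b)) = L 1 c *m delta_mx 0 (mxvec_index a b).
Proof.
have [<-|ab] := eqVneq a b; first exact: nc_linear_delta_diag.
apply: untvec_inj; apply: funext => j; rewrite untvec_delta.
set E := delta_mx a b; set Ebb : 'M[Cx R]_n := delta_mx b b.
have EE : E *m E = 0 by rewrite mul_delta_mx_cond eq_sym (negbTE ab) mulr0n.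
have Ebb_E : Ebb *m E = 0 by rewrite mul_delta_mx_cond eq_sym (negbTE ab) mulr0n.
have E_Ebb : E *m Ebb = E by rewrite mul_delta_mx.
set Hbb := c *m delta_mx 0 (mxvec_index b b).
set Hab := c *m delta_mx 0 (mxvec_index a b).
have shear : intertwines (untvec Hbb) (untvec (Hbb - Hab)) (1%:M + E).
  move=> i; rewrite !untvecE linearB linearB /= -!untvecE !untvec_delta -/E -/Ebb.
  rewrite mulmxDr mulmx1 -scalemxAl Ebb_E scaler0 addr0.
  by rewrite mulmxDl !mul1mx mulmxBr -!scalemxAr E_Ebb EE scaler0 subr0 subrK.
have := L_intertwines shear j.
rewrite linearB /= (untvecE (L n Hbb - L n Hab)) !linearB /= -!untvecE.
rewrite nc_linear_delta_diag untvec_delta -/Ebb.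
set M := untvec (L n Hab) j; set d := L 1 c j 0.
rewrite mulmxDr mulmx1 -scalemxAl Ebb_E scaler0 addr0 mulmxDl !mul1mx -scalemxAr E_Ebb.
rewrite -addrA -{1}[d *: Ebb]addr0 => /addrI /eqP; rewrite eq_sym subr_eq0 => /eqP MEM.
have EM0 : E *m M = 0.
  have := congr1 (mulmx E) MEM.
  by rewrite -scalemxAr EE scaler0 mulmxA mulmxDr mulmx1 EE addr0 => /esym.
by rewrite MEM mulmxDl mul1mx EM0 addr0.
Qed.

Lemma nc_linear_ampl n (H : 'M[Cx R]_(g, n * n)) : L n H = ampl (L 1) H.
Proof.
rewrite -{1}[H]ampl_id amplE linear_sum amplE; apply: eq_bigr => k _.
by case/mxvec_indexP: k => a b; rewrite nc_linear_delta.
Qed.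

End NcLinearMap.

Theorem lemma4p2 (R : realType) (g : nat) (D : forall n, set (tup R g n))
    (f : forall n, tup R g n -> tup R g n) (n : nat) :
  nc_domain D -> nc_bounded D -> contains0 D ->
  free_map D f -> analytic D f ->
  f 1%N (fun _ => 0) = (fun _ => 0) ->
  (0 < n)%N ->
  exists U : 'M[Cx R]_(g, n * n) -> 'M[Cx R]_(g, n * n),
    unitary_op U /\
    forall H : 'M[Cx R]_(g, n * n),
      'd (fhat f n) 0 (U H) = U (ampl ('d (fhat f 1%N) 0) H).
Proof.
move=> Dnc _ D0 f_free f_an _ _.
exists id; split; first by split=> //; split=> //; exists id.
move=> H; apply: (@nc_linear_ampl R g (fun k => 'd (fhat f k) 0)) => k m G G' Ga.
exact: (diff_fhat_intertwines Dnc D0 f_free f_an).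
Qed.
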